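(* For every integer $n\ge r+1$, $c_n(\alpha,\alpha^2,0)=0$ (i.e. the polynomial $c_n(\alpha,\beta,0)$ vanishes when $\beta=\alpha^2$).
   Context: Fix an integer $r\ge1$ and indeterminates $\alpha,\beta,\gamma$. Define polynomials $c_n=c_n(\alpha,\beta,\gamma)\in\mathbb{Q}[\alpha,\beta,\gamma]$ by $c_n=0$ for $n<0$, $c_0=1$, and for every integer $n\ge-3$, $$(n+4)c_{n+4}+(2n+6-r)\alpha c_{n+3}+\left[(n+2-r)\alpha^2+(2n+5-2r)\frac{\alpha^2-\beta}{4}\right]c_{n+2}+\left[(2n+3-3r)\alpha\frac{\alpha^2-\beta}{4}+\frac{\gamma}{2}\right]c_{n+1}+\frac{1}{16}(\alpha^2-\beta)^2(n+1-2r)c_n=0.$$ *)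

From HB Require Import structures.
From mathcomp Require Import all_boot all_order all_algebra.
From mathcomp Require Import mpoly.
Set Implicit Arguments. Unset Strict Implicit. Unset Printing Implicit Defensive.
Import Order.TTheory GRing.Theory Num.Theory.
Local Open Scope ring_scope.

Notation P3 := {mpoly rat[3]}.
Definition alpha : P3 := 'X_(0 : 'I_3).
Definition beta  : P3 := 'X_(1 : 'I_3).
Definition gamma : P3 := 'X_(2 : 'I_3).
Definition delta : P3 := (1 / 4 : rat) *: (alpha ^+ 2 - beta).

(* One step of the recurrence: given (c_{m-3}, c_{m-2}, c_{m-1}, c_m), with
   m >= 0, compute c_{m+1}.  Writing m+1 = n+4 (so n = m-3 >= -3 as an integer):
   (n+4) c_{n+4} = -[ (2n+6-r) a c_{n+3}
                     + ((n+2-r) a^2 + (2n+5-2r) d) c_{n+2}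
                     + ((2n+3-3r) a d + g/2) c_{n+1}
                     + (1/16)(a^2-b)^2 (n+1-2r) c_n ]. *)
Definition c_next (r m : nat) (c0 c1 c2 c3 : P3) : P3 :=
  let n : int := m%:Z - 3 in
  let rz : int := r%:Z in
  - (((m.+1)%:R : rat)^-1 *:
     ( ((2 * n + 6 - rz)%:~R : rat) *: (alpha * c3)
     + (((n + 2 - rz)%:~R : rat) *: alpha ^+ 2
        + ((2 * n + 5 - 2 * rz)%:~R : rat) *: delta) * c2
     + (((2 * n + 3 - 3 * rz)%:~R : rat) *: (alpha * delta)
        + (1 / 2 : rat) *: gamma) * c1
     + ((1 / 16 : rat) * (n + 1 - 2 * rz)%:~R) *: ((alpha ^+ 2 - beta) ^+ 2 * c0))).

(* c_window r m = (c_{m-3}, c_{m-2}, c_{m-1}, c_m), with c_k = 0 for k < 0. *)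
Fixpoint c_window (r m : nat) : P3 * P3 * P3 * P3 :=
  match m with
  | 0 => (0, 0, 0, 1)
  | m'.+1 =>
      let '(c0, c1, c2, c3) := c_window r m' in
      (c1, c2, c3, c_next r m' c0 c1 c2 c3)
  end.

Definition c (r n : nat) : P3 := (c_window r n).2.

Definition spec_beta_alpha2_gamma0 (p : P3) : P3 :=
  p \mPo [tuple alpha; alpha ^+ 2; 0].

From HB Require Import structures.
From mathcomp Require Import all_boot all_order all_algebra.
From mathcomp Require Import mpoly.
From mathcomp Require Import ring.
Local Open Scope ring_scope.
Import GRing.Theory Num.Theory.

(* At beta = alpha^2, gamma = 0 the quantity (alpha^2 - beta)/4 vanishes, and the
   recurrence collapses to the two-term relation
     (m+1) c_{m+1} + (2m - r) alpha c_m + (m - 1 - r) alpha^2 c_{m-1} = 0,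
   which is solved by c_m = C(r, m) alpha^m, the coefficients of (1 + alpha x)^r.
   Hence c_n vanishes there as soon as n > r. *)

Local Notation spec := spec_beta_alpha2_gamma0.

Lemma specD p q : spec (p + q) = spec p + spec q. Proof. exact: comp_mpolyD. Qed.
Lemma specN p : spec (- p) = - spec p. Proof. exact: comp_mpolyN. Qed.
Lemma specZ (k : rat) p : spec (k *: p) = k *: spec p. Proof. exact: comp_mpolyZ. Qed.
Lemma specM p q : spec (p * q) = spec p * spec q.
Proof. exact: (rmorphM (comp_mpoly _)). Qed.
Lemma specX p k : spec (p ^+ k) = spec p ^+ k.
Proof. exact: (rmorphXn (comp_mpoly _)). Qed.
Lemma spec0 : spec 0 = 0. Proof. exact: comp_mpoly0. Qed.
Lemma spec1 : spec 1 = 1. Proof. exact: comp_mpoly1. Qed.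

Lemma spec_alpha : spec alpha = alpha.
Proof. by rewrite /spec /alpha comp_mpolyXU. Qed.

Lemma spec_beta : spec beta = alpha ^+ 2.
Proof. by rewrite /spec /beta comp_mpolyXU. Qed.

Lemma spec_gamma : spec gamma = 0.
Proof. by rewrite /spec /gamma comp_mpolyXU. Qed.

Lemma spec_c_next r m c0 c1 c2 c3 :
  spec (c_next r m c0 c1 c2 c3) =
  - (m.+1%:R^-1 *: (((2 * m)%:R - r%:R : rat) *: (alpha * spec c3)
                    + (m%:R - 1 - r%:R : rat) *: (alpha ^+ 2 * spec c2))).
Proof.
rewrite /c_next !(specN, specD, specZ, specM, specX).
rewrite spec_alpha spec_beta spec_gamma subrr.
rewrite !(scaler0, expr0n, mul0r, mulr0, addr0) -!scalerAl.
congr (- (_ *: (_ *: _ + _ *: _))).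
- by rewrite rmorphB rmorphD rmorphM /= ?rmorphB; ring.
- by rewrite !rmorphB rmorphD /=; ring.
Qed.

Lemma mul_bin_succ_rat r m :
  m.+1%:R * 'C(r, m.+1)%:R = (r%:R - m%:R) * 'C(r, m)%:R :> rat.
Proof.
have [le_mr | lt_rm] := leqP m r; first by rewrite -!natrM mul_bin_left natrM natrB.
by rewrite !bin_small ?mulr0 // ltnW.
Qed.

Lemma bin_three_term r m :
  m.+2%:R * 'C(r, m.+2)%:R + ((2 * m.+1)%:R - r%:R) * 'C(r, m.+1)%:R
    + (m.+1%:R - 1 - r%:R) * 'C(r, m)%:R = 0 :> rat.
Proof.
rewrite mul_bin_succ_rat -(subrr (m.+1%:R * 'C(r, m.+1)%:R)).
rewrite [X in _ = _ - X]mul_bin_succ_rat.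
by rewrite !natrM !mulrSr; ring.
Qed.

Lemma c_recurrence r m :
  exists c0 c1, c r m.+2 = c_next r m.+1 c0 c1 (c r m) (c r m.+1).
Proof. by rewrite /c /=; case: (c_window r m) => [[[? c1] c2] ?]; exists c1, c2. Qed.

Lemma spec_c r n : spec (c r n) = 'C(r, n)%:R *: alpha ^+ n.
Proof.
suff closed_pair : forall m, spec (c r m) = 'C(r, m)%:R *: alpha ^+ m
    /\ spec (c r m.+1) = 'C(r, m.+1)%:R *: alpha ^+ m.+1.
  by case: (closed_pair n).
elim=> [|m [IHm IHm1]].
  rewrite [c r 1]/c /= spec_c_next spec0 spec1 bin0 bin1 scale1r expr1.
  split=> //; rewrite mulr0 scaler0 addr0 mulr1 invr1 scale1r muln0 sub0r.
  by rewrite scaleNr opprK.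
split=> //; have [c0 [c1 ->]] := c_recurrence r m.
rewrite spec_c_next IHm IHm1 -!scalerAr -exprS -exprD add2n !scalerA.
rewrite -scalerDl scalerA -scaleNr; congr (_ *: _).
have m2_neq0 : m.+2%:R != 0 :> rat by rewrite pnatr_eq0.
apply: (mulfI m2_neq0); rewrite mulrN mulrA mulfV // mul1r.
by apply/eqP; rewrite eq_sym -addr_eq0 addrA bin_three_term.
Qed.

Theorem corollary3p5 (r : nat) : (1 <= r)%N ->
  forall n : nat, (r + 1 <= n)%N -> spec_beta_alpha2_gamma0 (c r n) = 0.
Proof.
by move=> _ n lt_rn; rewrite spec_c bin_small ?scale0r // -addn1.
Qed.
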